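(* Let $q>1$ be the smallest period of $H$. Then $c>2A$, and at least one gap $\gamma_m$ ($1\le m\le q-1$) of the spectrum of $H$ is open.
   Context: Let $q\ge 2$ be an integer and let $(a_n)_{n\in\mathbb Z}$, $(b_n)_{n\in\mathbb Z}$ be real sequences with $a_n>0$, $a_{n+q}=a_n$, $b_{n+q}=b_n$ for all $n$, where $q$ is the smallest common period (there is no $1\le p<q$ with $a_{n+p}=a_n$ and $b_{n+p}=b_n$ for all $n$). $H$ is the bounded self-adjoint operator on $\ell^2(\mathbb Z)$ given by $(H\psi)_n=a_{n-1}\psi_{n-1}+b_n\psi_n+a_n\psi_{n+1}$. Set $A=(a_1a_2\cdots a_q)^{1/q}$. For $\lambda\in\mathbb C$ let $\phi(\lambda),\theta(\lambda)$ be the solutions of $a_{n-1}\psi_{n-1}+b_n\psi_n+a_n\psi_{n+1}=\lambda\psi_n$ ($n\in\mathbb Z$) with $\phi_0=0,\phi_1=1$ and $\theta_0=1,\theta_1=0$; the discriminant is the degree-$q$ polynomial $D(\lambda)=\phi_{q+1}(\lambda)+\theta_q(\lambda)$. The spectrum of $H$ is $\{\lambda\in\mathbb R:|D(\lambda)|\le 2\}$, a union of the $q$ bands $[\lambda^+_{m-1},\lambda^-_m]$, $m=1,\dots,q$, with $\lambda^+_0<\lambda^-_1\le\lambda^+_1<\lambda^-_2\le\dots\le\lambda^+_{q-1}<\lambda^-_q$, separated by the gaps $\gamma_m=(\lambda^-_m,\lambda^+_m)$, $m=1,\dots,q-1$ (a gap is open if $\lambda^-_m<\lambda^+_m$). Let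 $c=(\lambda^-_q-\lambda^+_0)/2$ be half the width of the spectrum. *)

From HB Require Import structures.
From mathcomp Require Import all_boot all_order all_algebra.
From mathcomp Require Import reals exp.
Set Implicit Arguments. Unset Strict Implicit. Unset Printing Implicit Defensive.
Import Order.TTheory GRing.Theory Num.Theory.
Local Open Scope ring_scope.

(* Solution of a_{n-1} psi_{n-1} + b_n psi_n + a_n psi_{n+1} = lam psi_n,
   computed forward from (psi_0, psi_1):
   jacobi_pair a b lam x0 x1 n = (psi_n, psi_{n+1}). *)
Fixpoint jacobi_pair (R : realType) (a b : int -> R) (lam x0 x1 : R) (n : nat)
  : R * R :=
  match n with
  | 0%N => (x0, x1)
  | n'.+1 =>
      let p := jacobi_pair a b lam x0 x1 n' in
      (p.2, ((lam - b (n'.+1)%:Z) * p.2 - a (n')%:Z * p.1) / a (n'.+1)%:Z)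
  end.

Definition jphi (R : realType) (a b : int -> R) (lam : R) (n : nat) : R :=
  (jacobi_pair a b lam 0 1 n).1.
Definition jtheta (R : realType) (a b : int -> R) (lam : R) (n : nat) : R :=
  (jacobi_pair a b lam 1 0 n).1.

Definition discr (R : realType) (a b : int -> R) (q : nat) (lam : R) : R :=
  jphi a b lam q.+1 + jtheta a b lam q.

Definition geomA (R : realType) (a : int -> R) (q : nat) : R :=
  powR (\prod_(1 <= i < q.+1) a i%:Z) (q%:R^-1).

From HB Require Import structures.
From mathcomp Require Import all_boot all_order all_algebra.
From mathcomp Require Import boolp reals exp trigo.
From mathcomp Require Import polyrcf.
From mathcomp Require Import ring lra zify.
Import Order.TTheory GRing.Theory Num.Theory.
Local Open Scope ring_scope.
Set Implicit Arguments. Unset Strict Implicit. Unset Printing Implicit Defensive.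

(* The discriminant D is a polynomial of degree q with leading coefficient
   A^-q. At the q - 1 zeros of phi_q, which interlace by the three-term
   recurrence, the Wronskian gives phi_(q+1) theta_q = 1, so there D has
   modulus at least 2 and alternating signs; adding the two outer edges of the
   spectrum gives q + 1 points of the convex hull [l, r] of the spectrum where
   A^q D alternates with modulus at least 2 A^q. The rescaled Chebyshev
   polynomial T of [l, r] has the same leading coefficient and modulus at most
   2 (c/2)^q on [l, r].
   If c <= 2A, then A^q D - T has degree < q and alternates weakly at q + 1
   points, so it vanishes; comparing the next two coefficients (the trace
   formulas for sum b_n and sum b_n^2 + 2 a_n^2) with the AM-GM inequality then
   forces a and b to be constant, against the minimality of q >= 2.
   If all gaps were closed, |D| <= 2 on all of [l, r], and since c > 2A the
   polynomial T - A^q D would alternate strictly at the q + 1 extremal points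
   of T, which is impossible for a nonzero polynomial of degree < q. *)

Section SignedPolynomials.
Variable R : rcfType.
Implicit Types (p : {poly R}) (x y e : R).

Lemma signrS n : (-1) ^+ n.+1 = - (-1) ^+ n :> R.
Proof. by rewrite exprS mulN1r. Qed.

Lemma signr_subn n i : (i <= n)%N -> (-1) ^+ n * (-1) ^+ i = (-1) ^+ (n - i) :> R.
Proof. by move=> le_in; rewrite -{1}(subnK le_in) exprD -mulrA -expr2 sqrr_sign mulr1. Qed.

Lemma opposite_signs_mulr_lt0 c x y : 0 < c * x -> 0 < - c * y -> x * y < 0.
Proof.
move=> cx_gt0 cy_lt0; have c_neq0 : c != 0.
  by apply: contraTneq cx_gt0 => ->; rewrite mul0r ltxx.
have := mulr_gt0 cx_gt0 cy_lt0; rewrite mulNr mulrN oppr_gt0 mulrACA -expr2.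
by rewrite pmulr_rlt0 // exprn_even_gt0 // c_neq0 orbT.
Qed.

Lemma increasing_upto (s : nat -> R) n :
  (forall i, (i.+1 < n)%N -> s i < s i.+1) -> forall i j, (i < j < n)%N -> s i < s j.
Proof.
move=> s_incr i j /andP[lt_ij lt_jn]; elim: j lt_ij lt_jn => // j IH.
rewrite ltnS leq_eqVlt => /orP[/eqP-> lt_jn|lt_ij lt_jn]; first exact: s_incr.
by apply: lt_trans (IH lt_ij (ltnW lt_jn)) (s_incr _ lt_jn).
Qed.

Lemma nondecreasing_upto (s : nat -> R) n :
  (forall i j, (i < j < n)%N -> s i < s j) -> forall i j, (i <= j < n)%N -> s i <= s j.
Proof.
move=> s_incr i j /andP[]; rewrite leq_eqVlt => /orP[/eqP->//|lt_ij lt_jn].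
by rewrite ltW // s_incr // lt_ij.
Qed.

Lemma poly_gt0_pinfty p : 0 < lead_coef p -> forall y, exists2 x, y <= x & 0 < p.[x].
Proof.
move=> lc_gt0 y; have [N leN] := poly_pinfty_gt_lc lc_gt0.
exists (Num.max y N); first by rewrite le_max lexx.
by apply: lt_le_trans lc_gt0 (leN _ _); rewrite le_max lexx orbT.
Qed.

Lemma poly_signed_gt0_minfty p n : size p = n.+1 -> 0 < lead_coef p ->
  forall y, exists2 x, x <= y & 0 < (-1) ^+ n * p.[x].
Proof.
move=> szp lc_gt0 y; pose pN := (-1) ^+ n *: (p \Po - 'X).
have lc_pN : lead_coef pN = lead_coef p.
  rewrite lead_coefZ lead_coef_comp ?size_polyN ?size_polyX //.
  by rewrite lead_coefN lead_coefX szp mulrCA -expr2 sqrr_sign mulr1.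
rewrite -lc_pN in lc_gt0; have [x le_yx pNx_gt0] := poly_gt0_pinfty lc_gt0 (- y).
exists (- x); first by rewrite lerNl.
by rewrite hornerZ horner_comp hornerN hornerX in pNx_gt0.
Qed.

Lemma horner_roots_prod p n (z : nat -> R) : size p = n.+1 ->
  (forall i j, (i < j < n)%N -> z i < z j) -> (forall k, (k < n)%N -> root p (z k)) ->
  forall x, p.[x] = lead_coef p * \prod_(k < n) (x - z k).
Proof.
move=> szp z_incr z_root x.
have all_root : all (root p) (mkseq z n).
  by apply/allP => y /mapP[k]; rewrite mem_iota add0n => /z_root root_k ->.
have z_uniq : poly.uniq_roots (mkseq z n).
  rewrite uniq_rootsE map_inj_in_uniq ?iota_uniq // => i j.
  rewrite !mem_iota !add0n => lt_in lt_jn eq_zij.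
  have [lt_ij|lt_ji|//] := ltngtP i j.
  - by have := z_incr i j; rewrite lt_ij lt_jn eq_zij ltxx => /(_ isT).
  - by have := z_incr j i; rewrite lt_ji lt_in eq_zij ltxx => /(_ isT).
have [r p_eq] := uniq_roots_prod_XsubC all_root z_uniq.
have sz_prod : size (\prod_(w <- mkseq z n) ('X - w%:P)) = n.+1.
  by rewrite size_prod_XsubC size_mkseq.
have r_const : r = (lead_coef p)%:P.
  have r_neq0 : r != 0 by apply: contra_eq_neq p_eq => ->; rewrite mul0r -size_poly_eq0 szp.
  have prod_neq0 : \prod_(w <- mkseq z n) ('X - w%:P) != 0 by rewrite -size_poly_eq0 sz_prod.
  have sz_r : size r = 1%N
    by move: szp; rewrite p_eq size_mul // sz_prod addnS -[n.+1]add1n => /= /addIn.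
  rewrite p_eq lead_coefM (monicP (monic_prod_XsubC _ _ _)) mulr1.
  by rewrite [r]size1_polyC ?sz_r // lead_coefC.
rewrite {1}p_eq r_const hornerCM horner_prod big_map.
rewrite (_ : iota 0 n = index_iota 0 n) ?big_mkord; last by rewrite /index_iota subn0.
by congr (_ * _); apply: eq_bigr => i _; rewrite hornerXsubC.
Qed.

Lemma signr_prod_gt0 (f : nat -> R) n j : (j <= n)%N ->
  (forall k, (k < j)%N -> 0 < f k) -> (forall k, (j <= k < n)%N -> f k < 0) ->
  0 < (-1) ^+ (n - j) * \prod_(k < n) f k.
Proof.
move=> /subnK <-; move: (n - j)%N => m f_pos f_neg; rewrite addnK.
elim: m f_neg => [|m IH] f_neg.
  by rewrite add0n mul1r prodr_gt0 // => k _; apply: f_pos.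
rewrite addSn big_ord_recr /= signrS mulrA !mulNr -mulrN mulr_gt0 //.
  by apply: IH => k ?; apply: f_neg; lia.
by rewrite oppr_gt0 f_neg //; lia.
Qed.

Lemma alternating_poly_eq0 n p (s : nat -> R) e : e != 0 -> (size p <= n)%N ->
  (forall i, (i < n)%N -> s i < s i.+1) ->
  (forall i, (i <= n)%N -> 0 <= e * (-1) ^+ i * p.[s i]) -> p = 0.
Proof.
elim: n p s e => [|n IH] p s e e_neq0 szp s_incr alt.
  by apply/eqP; rewrite -size_poly_leq0.
have s_lt i j : (i < j <= n.+1)%N -> s i < s j.
  by move=> ij; apply: (increasing_upto (n := n.+2)) => [k ?|]; [apply: s_incr|lia].
have [r r_in root_r] : {r | r \in `[s 0%N, s 1%N] & root p r}.
  apply: polyrcf.poly_ivt; first exact/ltW/s_incr.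
  have := alt 0%N isT; have := alt 1%N isT; rewrite expr0 expr1 mulr1 mulrN1.
  have : 0 < e ^+ 2 by rewrite exprn_even_gt0.
  by nra.
move: r_in; rewrite in_itv /= => /andP[le_s0r le_rs1].
pose p' := p %/ ('X - r%:P).
have p_eqM : p = p' * ('X - r%:P) by rewrite divpK // dvdp_XsubCl.
have p_eq x : p.[x] = p'.[x] * (x - r) by rewrite {1}p_eqM hornerM hornerXsubC.
have right_of_r x c : r < x -> 0 <= c * p.[x] -> 0 <= c * p'.[x].
  by move=> lt_rx; rewrite p_eq mulrA pmulr_lge0 // subr_gt0.
have left_of_r x c : x < r -> 0 <= c * p.[x] -> 0 <= - c * p'.[x].
  by move=> lt_xr; rewrite p_eq mulrA nmulr_lge0 ?subr_lt0 // mulNr oppr_ge0.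
suff p'_eq0 : p' = 0 by rewrite p_eqM p'_eq0 mul0r.
(* Drop [s 0] if it is the root, else [s 1]: the points left avoid [r] and alternate. *)
pose t i := if i == 0%N then (if r == s 0%N then s 1%N else s 0%N) else s i.+1.
apply: (IH p' t (- e)); rewrite ?oppr_eq0 //.
- by rewrite size_divp ?polyXsubC_eq0 // size_XsubC subn1; move: szp; case: (size p).
- case=> [|i] lt_in; rewrite /t /=; last exact: s_incr.
  by case: ifP => _; apply: s_lt; lia.
case=> [|i] le_in; rewrite /t /=.
  rewrite expr0 mulr1; case: eqP => [r_eq|/eqP r_neq].
    apply: right_of_r; first by rewrite r_eq s_lt.
    by have := alt 1%N isT; rewrite expr1 mulrN1.
  apply: left_of_r; last by have := alt 0%N isT; rewrite expr0 mulr1.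
  by rewrite lt_neqAle eq_sym r_neq le_s0r.
apply: right_of_r; first by apply: le_lt_trans le_rs1 (s_lt _ _ _); lia.
by rewrite mulNr -mulrN -signrS; apply: alt.
Qed.

Lemma alternating_roots p n (y : nat -> R) e :
  (forall i, (i < n)%N -> y i < y i.+1) ->
  (forall i, (i <= n)%N -> 0 < e * (-1) ^+ i * p.[y i]) ->
  exists w : nat -> R, forall j, (j < n)%N -> y j < w j < y j.+1 /\ root p (w j).
Proof.
move=> y_incr alt.
have root_in j : exists x, (j < n)%N -> y j < x < y j.+1 /\ root p x.
  have [lt_jn|_] := ltnP j n; last by exists 0.
  have sign_change : p.[y j] * p.[y j.+1] < 0.
    apply: (@opposite_signs_mulr_lt0 (e * (-1) ^+ j)); first exact: alt (ltnW lt_jn).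
    by rewrite -mulrN -signrS; apply: alt.
  have [x x_in root_x] := poly_ivtoo (ltW (y_incr j lt_jn)) sign_change.
  by exists x; rewrite in_itv /= in x_in.
by have [w wP] := choice root_in; exists w => j /wP.
Qed.

Definition bracket (L U : R) (z : nat -> R) n i :=
  if i == 0%N then L else if i == n.+1 then U else z i.-1.

Lemma bracketE L U z n i : (0 < i <= n)%N -> bracket L U z n i = z i.-1.
Proof. by move=> i_in; rewrite /bracket ifF ?ifF //; apply/negbTE/eqP; lia. Qed.

Lemma bracket_lt L U z n : (0 < n)%N -> (forall i j, (i < j < n)%N -> z i < z j) ->
  L < z 0%N -> z n.-1 < U -> forall i, (i < n.+1)%N -> bracket L U z n i < bracket L U z n i.+1.
Proof.
move=> n_gt0 z_lt L_lt lt_U [|i] lt_in.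
  by rewrite (@bracketE L U z n 1%N) //; apply/andP.
rewrite (@bracketE L U z n i.+1) /=; last lia.
have [n_eq|ne] := eqVneq i.+1 n; first by subst n; rewrite /bracket /= eqxx.
by rewrite bracketE /=; [apply: z_lt|]; lia.
Qed.

Lemma poly_root_gt p x : 0 < lead_coef p -> p.[x] < 0 -> exists2 r, x < r & root p r.
Proof.
move=> lc_gt0 px_lt0; have [y le_xy py_gt0] := poly_gt0_pinfty lc_gt0 x.
have sign_change : p.[x] * p.[y] < 0 by rewrite pmulr_llt0.
have [r r_in root_r] := poly_ivtoo le_xy sign_change.
by exists r => //; rewrite in_itv /= in r_in; case/andP: r_in.
Qed.

Lemma poly_root_lt p n x : size p = n.+1 -> 0 < lead_coef p ->
  (-1) ^+ n * p.[x] < 0 -> exists2 r, r < x & root p r.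
Proof.
move=> szp lc_gt0 px_neg; have [y le_yx py_pos] := poly_signed_gt0_minfty szp lc_gt0 x.
have sign_change : p.[y] * p.[x] < 0.
  by apply: (@opposite_signs_mulr_lt0 ((-1) ^+ n)); rewrite // mulNr oppr_gt0.
have [r r_in root_r] := poly_ivtoo le_yx sign_change.
by exists r => //; rewrite in_itv /= in r_in; case/andP: r_in.
Qed.

End SignedPolynomials.

Lemma size_lead_coef_top (R : nzRingType) (p : {poly R}) n :
  (size p <= n.+1)%N -> p`_n != 0 -> size p = n.+1 /\ lead_coef p = p`_n.
Proof.
move=> szp pn_neq0; suff sz : size p = n.+1 by rewrite /lead_coef sz.
by apply/eqP; rewrite eqn_leq szp ltnNge; apply: contra pn_neq0 => /leq_sizeP ->.
Qed.

Section JacobiPolynomials.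
Variable R : realType.
Variables (a b : int -> R).
Hypothesis a_gt0 : forall n, 0 < a n.

Let a_neq0 n : a n != 0. Proof. by rewrite gt_eqF. Qed.

Fixpoint jacobi_poly_pair (p0 p1 : {poly R}) n : {poly R} * {poly R} :=
  match n with
  | 0%N => (p0, p1)
  | n'.+1 => let p := jacobi_poly_pair p0 p1 n' in
     (p.2, (a n'.+1)^-1 *: (p.2 * 'X - b n'.+1 *: p.2 - a n' *: p.1))
  end.

Definition jacobi_poly p0 p1 n := (jacobi_poly_pair p0 p1 n).1.
Definition phi_poly := jacobi_poly 0 1.
Definition theta_poly := jacobi_poly 1 0.
Definition discr_poly q := phi_poly q.+1 + theta_poly q.

Lemma jacobi_polySS p0 p1 n : jacobi_poly p0 p1 n.+2 = (a n.+1)^-1 *: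
  (jacobi_poly p0 p1 n.+1 * 'X - b n.+1 *: jacobi_poly p0 p1 n.+1 - a n *: jacobi_poly p0 p1 n).
Proof. by []. Qed.

Lemma jacobi_pairSS x0 x1 lam n : (jacobi_pair a b lam x0 x1 n.+2).1 =
  ((lam - b n.+1) * (jacobi_pair a b lam x0 x1 n.+1).1
   - a n * (jacobi_pair a b lam x0 x1 n).1) / a n.+1.
Proof. by []. Qed.

Lemma horner_jacobi_poly x0 x1 lam n :
  (jacobi_poly x0%:P x1%:P n).[lam] = (jacobi_pair a b lam x0 x1 n).1.
Proof.
suff : (jacobi_poly x0%:P x1%:P n).[lam] = (jacobi_pair a b lam x0 x1 n).1 /\
       (jacobi_poly x0%:P x1%:P n.+1).[lam] = (jacobi_pair a b lam x0 x1 n).2 by case.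
elim: n => [|n [IH1 IH2]]; first by rewrite /jacobi_poly /= !hornerC.
split; first by rewrite IH2.
by rewrite jacobi_polySS /= !hornerE IH1 IH2 mulrC; congr (_ * _); ring.
Qed.

Lemma horner_phi_poly lam n : (phi_poly n).[lam] = jphi a b lam n.
Proof. by rewrite /phi_poly -polyC0 -polyC1 horner_jacobi_poly. Qed.

Lemma horner_theta_poly lam n : (theta_poly n).[lam] = jtheta a b lam n.
Proof. by rewrite /theta_poly -polyC0 -polyC1 horner_jacobi_poly. Qed.

Lemma horner_discr_poly q lam : (discr_poly q).[lam] = discr a b q lam.
Proof. by rewrite hornerD horner_phi_poly horner_theta_poly. Qed.

Lemma jacobi_poly_coef0 p0 p1 n : (jacobi_poly p0 p1 n.+2)`_0 =
  (a n.+1)^-1 * (- b n.+1 * (jacobi_poly p0 p1 n.+1)`_0 - a n * (jacobi_poly p0 p1 n)`_0).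
Proof. by rewrite jacobi_polySS coefZ !coefB coefMX !coefZ /=; ring. Qed.

Lemma jacobi_poly_coefS p0 p1 n j : (jacobi_poly p0 p1 n.+2)`_j.+1 =
  (a n.+1)^-1 * ((jacobi_poly p0 p1 n.+1)`_j - b n.+1 * (jacobi_poly p0 p1 n.+1)`_j.+1
                 - a n * (jacobi_poly p0 p1 n)`_j.+1).
Proof. by rewrite jacobi_polySS coefZ !coefB coefMX !coefZ. Qed.

Lemma jacobi_poly_size p0 p1 n m : (size (jacobi_poly p0 p1 n) <= m)%N ->
  (size (jacobi_poly p0 p1 n.+1) <= m.+1)%N -> (size (jacobi_poly p0 p1 n.+2) <= m.+2)%N.
Proof.
move=> /leq_sizeP sz0 /leq_sizeP sz1; apply/leq_sizeP => -[//|j] lt_mj.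
by rewrite jacobi_poly_coefS !sz1 ?sz0 ?mulr0 ?subrr ?mulr0 //; lia.
Qed.

Definition prod_a n := \prod_(i < n) a i.+1.
Definition sum_b n := \sum_(i < n) b i.+1.
Definition sum_b2 n := \sum_(i < n) b i.+1 ^+ 2.
Definition sum_a2 n := \sum_(i < n) a i.+1 ^+ 2.
Definition sym2 n := (sum_b n ^+ 2 - sum_b2 n) / 2 - sum_a2 n.-1.

Lemma prod_a_gt0 n : 0 < prod_a n.
Proof. by apply: prodr_gt0 => i _. Qed.

Lemma prod_a_neq0 n : prod_a n != 0.
Proof. by rewrite gt_eqF ?prod_a_gt0. Qed.

Lemma prod_aS n : prod_a n.+1 = prod_a n * a n.+1.
Proof. by rewrite /prod_a big_ord_recr. Qed.

Lemma sum_bS n : sum_b n.+1 = sum_b n + b n.+1.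
Proof. by rewrite /sum_b big_ord_recr. Qed.

Lemma sum_b2S n : sum_b2 n.+1 = sum_b2 n + b n.+1 ^+ 2.
Proof. by rewrite /sum_b2 big_ord_recr. Qed.

Lemma sum_a2S n : sum_a2 n.+1 = sum_a2 n + a n.+1 ^+ 2.
Proof. by rewrite /sum_a2 big_ord_recr. Qed.

Lemma phi_poly_size n : (size (phi_poly n) <= n)%N.
Proof.
suff : (size (phi_poly n) <= n)%N /\ (size (phi_poly n.+1) <= n.+1)%N by case.
elim: n => [|n [sz0 sz1]]; first by rewrite /phi_poly /jacobi_poly /= size_poly0 size_poly1.
by split => //; apply: jacobi_poly_size.
Qed.

Lemma theta_poly_size n : (size (theta_poly n.+1) <= n)%N.
Proof.
suff : (size (theta_poly n.+1) <= n)%N /\ (size (theta_poly n.+2) <= n.+1)%N by case.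
elim: n => [|n [sz0 sz1]]; last by split => //; apply: jacobi_poly_size.
rewrite /theta_poly /jacobi_poly /= size_poly0; split => //.
rewrite size_scale ?invr_eq0 // mul0r scaler0 subr0 sub0r size_polyN.
by rewrite alg_polyC size_polyC leq_b1.
Qed.

Lemma phi_poly_lead n : (phi_poly n.+1)`_n = (prod_a n)^-1.
Proof.
elim: n => [|n IH]; first by rewrite /prod_a big_ord0 invr1 coef1.
rewrite jacobi_poly_coefS -!/(phi_poly _) IH prod_aS invfM.
rewrite !(leq_sizeP _ _ (phi_poly_size _)) //.
by rewrite !mulr0 !subr0 mulrC.
Qed.

Lemma phi_poly_coef1 n : (phi_poly n.+2)`_n = - sum_b n.+1 / prod_a n.+1.
Proof.
elim: n => [|n IH].
  rewrite jacobi_poly_coef0 /sum_b /prod_a !big_ord1 /jacobi_poly /= coef1 coef0 /=.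
  by field; rewrite ?a_neq0.
rewrite jacobi_poly_coefS -!/(phi_poly _) IH phi_poly_lead.
rewrite (leq_sizeP _ _ (phi_poly_size _)) // (sum_bS n.+1) (prod_aS n.+1).
by field; rewrite ?a_neq0 ?prod_a_neq0.
Qed.

Lemma phi_poly_coef2 n : (phi_poly n.+3)`_n = sym2 n.+2 / prod_a n.+2.
Proof.
elim: n => [|n IH].
  rewrite jacobi_poly_coef0 -!/(phi_poly _) (phi_poly_coef1 0) /jacobi_poly /= coef1.
  rewrite /sym2 /sum_b /sum_b2 /sum_a2 /prod_a !big_ord_recr !big_ord0 /=.
  by field; rewrite ?a_neq0.
rewrite jacobi_poly_coefS -!/(phi_poly _) IH phi_poly_coef1 phi_poly_lead.
rewrite /sym2 /= (sum_bS n.+2) (sum_b2S n.+2) (sum_a2S n.+1) (prod_aS n.+2) (prod_aS n.+1).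
by field; rewrite ?a_neq0 ?prod_a_neq0.
Qed.

Lemma theta_poly_lead n : (theta_poly n.+2)`_n = - a 0 / prod_a n.+1.
Proof.
elim: n => [|n IH].
  rewrite jacobi_poly_coef0 /jacobi_poly /= coef0 coef1 /prod_a big_ord1 /=.
  by field; rewrite ?a_neq0.
rewrite jacobi_poly_coefS -!/(theta_poly _) IH.
rewrite !(leq_sizeP _ _ (theta_poly_size _)) // (prod_aS n.+1).
by field; rewrite ?a_neq0 ?prod_a_neq0.
Qed.

Lemma wronskian_theta_phi lam n :
  jtheta a b lam n * jphi a b lam n.+1 - jtheta a b lam n.+1 * jphi a b lam n = a 0 / a n.
Proof.
elim: n => [|n IH]; first by rewrite /jtheta /jphi /= mul1r mulr0 subr0 divff.
rewrite /jtheta /jphi !jacobi_pairSS -/(jtheta _ _ _ n.+1) -/(jphi _ _ _ n.+1).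
rewrite -/(jtheta _ _ _ n) -/(jphi _ _ _ n).
transitivity (a n / a n.+1 *
  (jtheta a b lam n * jphi a b lam n.+1 - jtheta a b lam n.+1 * jphi a b lam n)).
  by field; rewrite ?a_neq0.
by rewrite IH; field; rewrite ?a_neq0.
Qed.

Lemma phi_poly_size_lead n :
  size (phi_poly n.+1) = n.+1 /\ lead_coef (phi_poly n.+1) = (prod_a n)^-1.
Proof.
rewrite -phi_poly_lead; apply: size_lead_coef_top; first exact: phi_poly_size.
by rewrite phi_poly_lead invr_eq0 prod_a_neq0.
Qed.

Lemma discr_poly_coef_top k : (discr_poly k.+2)`_k.+2 = (prod_a k.+2)^-1.
Proof. by rewrite coefD phi_poly_lead (leq_sizeP _ _ (theta_poly_size _)) ?addr0. Qed.

Lemma discr_poly_size_lead k :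
  size (discr_poly k.+2) = k.+3 /\ lead_coef (discr_poly k.+2) = (prod_a k.+2)^-1.
Proof.
rewrite -discr_poly_coef_top; apply: size_lead_coef_top.
  rewrite (leq_trans (size_polyD _ _)) // geq_max phi_poly_size /=.
  exact: leq_trans (theta_poly_size _) (leqW (leqnSn _)).
by rewrite discr_poly_coef_top invr_eq0 prod_a_neq0.
Qed.

Lemma discr_poly_coef1 k : (discr_poly k.+2)`_k.+1 = - sum_b k.+2 / prod_a k.+2.
Proof. by rewrite coefD phi_poly_coef1 (leq_sizeP _ _ (theta_poly_size _)) ?addr0. Qed.

Lemma discr_poly_coef2 k :
  (discr_poly k.+2)`_k = sym2 k.+2 / prod_a k.+2 - a 0 / prod_a k.+1.
Proof. by rewrite coefD phi_poly_coef2 theta_poly_lead mulNr. Qed.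

Lemma jphiSS_root lam n : jphi a b lam n.+1 = 0 ->
  jphi a b lam n.+2 = - (a n / a n.+1) * jphi a b lam n.
Proof.
by move=> phi0; rewrite /jphi jacobi_pairSS -/(jphi _ _ _ _) phi0 mulr0 sub0r !mulNr mulrAC.
Qed.

End JacobiPolynomials.

Section DirichletZeros.
Variable R : realType.
Variables (a b : int -> R).
Hypothesis a_gt0 : forall n, 0 < a n.

(* The sign condition says that the zeros of phi_n interlace those of phi_(n+1). *)
Definition phi_zeros n (z : nat -> R) :=
  (forall i j, (i < j < n)%N -> z i < z j) /\
  forall k, (k < n)%N -> jphi a b (z k) n.+1 = 0 /\ 0 < (-1) ^+ (n - k.+1) * jphi a b (z k) n.

Definition interlacing_zeros N (z w : nat -> R) :=
  forall j, (j < N.+1)%N -> jphi a b (w j) N.+2 = 0 /\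
    ((0 < j)%N -> z j.-1 < w j) /\ ((j < N)%N -> w j < z j).

Lemma phi_zeros_sign_next N z : phi_zeros N z ->
  forall k, (k < N)%N -> 0 < (-1) ^+ (N - k) * jphi a b (z k) N.+2.
Proof.
move=> [_ zP] k lt_kN; have [root_k sign_k] := zP k lt_kN.
rewrite jphiSS_root // (_ : (N - k = (N - k.+1).+1)%N); last by lia.
rewrite signrS !mulNr mulrN opprK mulrCA.
by rewrite mulr_gt0 // divr_gt0.
Qed.

Lemma phi_zeros_next N z : (0 < N)%N -> phi_zeros N z ->
  exists w : nat -> R, interlacing_zeros N z w.
Proof.
move=> N_gt0 zW; have [z_lt _] := zW; have sign_z := phi_zeros_sign_next zW.
pose P := phi_poly a b N.+2.
have [szP lcP] := phi_poly_size_lead b a_gt0 N.+1.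
have lcP_gt0 : 0 < lead_coef P by rewrite lcP invr_gt0 prod_a_gt0.
have [L le_L sign_L] := poly_signed_gt0_minfty szP lcP_gt0 (z 0%N - 1).
have [U le_U sign_U] := poly_gt0_pinfty lcP_gt0 (z N.-1 + 1).
pose y := bracket L U z N.
have [w wP] : exists w : nat -> R,
    forall j, (j < N.+1)%N -> y j < w j < y j.+1 /\ root P (w j).
  apply: (@alternating_roots _ _ _ _ ((-1) ^+ N.+1)).
    by apply: bracket_lt => //; lra.
  case=> [|i] le_iN; first by rewrite /y /bracket expr0 mulr1.
  have [->|ne] := eqVneq i.+1 N.+1.
    by rewrite /y /bracket /= eqxx -expr2 sqrr_sign mul1r.
  rewrite /y bracketE /=; last lia.
  by rewrite signr_subn // horner_phi_poly subSS; apply: sign_z; lia.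
exists w => j lt_jN; have [/andP[lt_yw lt_wy] root_w] := wP j lt_jN.
split; first by rewrite -horner_phi_poly; apply/rootP.
split => [j_gt0|lt_jN']; first by move: lt_yw; rewrite /y bracketE //; lia.
by move: lt_wy; rewrite /y bracketE //; lia.
Qed.

Lemma phi_zeros_interlaced N z w :
  phi_zeros N z -> interlacing_zeros N z w -> phi_zeros N.+1 w.
Proof.
move=> [z_lt zP] wP; have z_le := nondecreasing_upto z_lt.
have w_gt_z i k : (i < k < N.+1)%N -> z i < w k.
  move=> ik; apply: le_lt_trans (z_le i k.-1 _) ((wP k _).2.1 _); lia.
have w_lt_z i k : (k <= i < N)%N -> w k < z i.
  move=> ki; apply: lt_le_trans ((wP k _).2.2 _) (z_le k i _); lia.
split=> [i j ij|k lt_kN]; first by apply: lt_trans (w_lt_z i i _) (w_gt_z i j _); lia.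
split; first exact: (wP k lt_kN).1.
have [szP lcP] := phi_poly_size_lead b a_gt0 N.
have root_z i : (i < N)%N -> root (phi_poly a b N.+1) (z i).
  by move=> lt_iN; apply/rootP; rewrite horner_phi_poly (zP i lt_iN).1.
rewrite -horner_phi_poly (horner_roots_prod szP z_lt root_z) mulrCA subSS.
apply: mulr_gt0; first by rewrite lcP invr_gt0 prod_a_gt0.
apply: (@signr_prod_gt0 _ (fun i => w k - z i)) => [|i|i]; first lia.
  by move=> lt_ik; rewrite subr_gt0 w_gt_z //; lia.
by move=> ki; rewrite subr_lt0 w_lt_z.
Qed.

Lemma phi_zeros_exist n : exists z, phi_zeros n.+1 z.
Proof.
elim: n => [|n [z zW]].
  exists (fun=> b 1); split => [i j|k _]; first lia.
  by rewrite /jphi /= subrr !mul0r mulr0 subr0 mul0r expr0 mul1r.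
have [w wP] := phi_zeros_next (ltn0Sn _) zW.
by exists w; apply: phi_zeros_interlaced zW wP.
Qed.

End DirichletZeros.

Section ScaledChebyshev.
Variable R : realType.
Variables (m h : R).

(* [cheb_poly n] is [2 h^n T_n ((X - m) / 2h)]: it maps [m + 2h cos t] to [2 h^n cos (n t)]. *)
Fixpoint cheb_pair n : {poly R} * {poly R} :=
  match n with
  | 0%N => (2%:P, 'X - m%:P)
  | n'.+1 => let p := cheb_pair n' in (p.2, ('X - m%:P) * p.2 - h ^+ 2 *: p.1)
  end.

Definition cheb_poly n := (cheb_pair n).1.

Lemma cheb_polySS n : cheb_poly n.+2 = ('X - m%:P) * cheb_poly n.+1 - h ^+ 2 *: cheb_poly n.
Proof. by []. Qed.

Lemma cheb_poly_coefS n j : (cheb_poly n.+2)`_j.+1 =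
  (cheb_poly n.+1)`_j - m * (cheb_poly n.+1)`_j.+1 - h ^+ 2 * (cheb_poly n)`_j.+1.
Proof. by rewrite cheb_polySS mulrBl !coefB coefXM coefCM !coefZ. Qed.

Lemma cheb_poly_coef0 n :
  (cheb_poly n.+2)`_0 = - m * (cheb_poly n.+1)`_0 - h ^+ 2 * (cheb_poly n)`_0.
Proof. by rewrite cheb_polySS mulrBl !coefB coefXM coefCM !coefZ /=; ring. Qed.

Lemma cheb_poly_size n : (size (cheb_poly n) <= n.+1)%N.
Proof.
suff : (size (cheb_poly n) <= n.+1)%N /\ (size (cheb_poly n.+1) <= n.+2)%N by case.
elim: n => [|n [/leq_sizeP sz0 /leq_sizeP sz1]].
  by rewrite size_polyC size_XsubC leq_b1.
split; first exact/leq_sizeP.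
apply/leq_sizeP => -[//|j] lt_nj.
by rewrite cheb_poly_coefS !sz1 ?sz0 ?mulr0 ?subrr //; lia.
Qed.

Lemma cheb_poly_lead n : (cheb_poly n.+1)`_n.+1 = 1.
Proof.
elim: n => [|n IH]; first by rewrite coefB coefX coefC subr0.
rewrite cheb_poly_coefS IH !(leq_sizeP _ _ (cheb_poly_size _)) //.
by rewrite !mulr0 !subr0.
Qed.

Lemma cheb_poly_coef1 n : (cheb_poly n.+1)`_n = - n.+1%:R * m.
Proof.
elim: n => [|n IH]; first by rewrite coefB coefX coefC sub0r mulN1r.
rewrite cheb_poly_coefS IH cheb_poly_lead (leq_sizeP _ _ (cheb_poly_size _)) //.
by rewrite [in RHS]mulrS; ring.
Qed.

Lemma cheb_poly_coef2 n :
  (cheb_poly n.+2)`_n = n.+2%:R * n.+1%:R / 2 * m ^+ 2 - n.+2%:R * h ^+ 2.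
Proof.
elim: n => [|n IH].
  by rewrite cheb_poly_coef0 coefB coefX coefC /= coefC /=; field.
by rewrite cheb_poly_coefS IH cheb_poly_coef1 cheb_poly_lead !mulrS; field.
Qed.

Lemma cosSS_mul (n : nat) (t : R) :
  cos (n.+2%:R * t) = 2 * cos t * cos (n.+1%:R * t) - cos (n%:R * t).
Proof.
have -> : n.+2%:R * t = n.+1%:R * t + t by rewrite (mulrS _ n.+1); ring.
have -> : n%:R * t = n.+1%:R * t - t by rewrite (mulrS _ n); ring.
by rewrite cosD cosB; ring.
Qed.

Lemma horner_cheb_poly_cos (t : R) n :
  (cheb_poly n).[m + 2 * h * cos t] = 2 * h ^+ n * cos (n%:R * t).
Proof.
suff : (cheb_poly n).[m + 2 * h * cos t] = 2 * h ^+ n * cos (n%:R * t) /\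
  (cheb_poly n.+1).[m + 2 * h * cos t] = 2 * h ^+ n.+1 * cos (n.+1%:R * t) by case.
elim: n => [|n [IH0 IH1]].
  by rewrite !hornerE /= cos0 mulr1 expr1; split => //; ring.
split=> //; rewrite cheb_polySS hornerD hornerN hornerZ hornerM hornerXsubC IH0 IH1.
by rewrite cosSS_mul !exprS; ring.
Qed.

Hypothesis h_gt0 : 0 < h.

Lemma cheb_poly_bound n x : m - 2 * h <= x <= m + 2 * h ->
  `|(cheb_poly n).[x]| <= 2 * h ^+ n.
Proof.
move=> /andP[le_x x_le]; set y := (x - m) / (2 * h).
have h2_gt0 : 0 < 2 * h by rewrite mulr_gt0.
have y_in : y \in `[(-1), 1].
  by rewrite in_itv /= /y ler_pdivlMr // ler_pdivrMr //; apply/andP; split; lra.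
have -> : x = m + 2 * h * cos (acos y).
  by rewrite acosK // /y mulrC divfK ?gt_eqF // addrC subrK.
have hn_ge0 : 0 <= 2 * h ^+ n by rewrite mulr_ge0 ?exprn_ge0 // ltW.
by rewrite horner_cheb_poly_cos normrM ger0_norm // ler_piMr ?cos_max.
Qed.

Lemma cos_natmul_pi (n : nat) : cos (n%:R * pi) = (-1) ^+ n :> R.
Proof.
elim: n => [|n IH]; first by rewrite mul0r cos0.
by rewrite mulrS mulrDl mul1r addrC cosDpi IH signrS.
Qed.

Definition cheb_node q i := m + 2 * h * cos ((q - i)%:R * pi / q%:R).

Lemma horner_cheb_node q i : (0 < q)%N -> (i <= q)%N ->
  (cheb_poly q).[cheb_node q i] = 2 * h ^+ q * (-1) ^+ (q - i).
Proof.
move=> q_gt0 le_iq; rewrite horner_cheb_poly_cos -cos_natmul_pi.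
have q_neq0 : (q%:R : R) != 0 by rewrite pnatr_eq0 -lt0n.
by congr (_ * cos _); field.
Qed.

Lemma cheb_node_in q i : m - 2 * h <= cheb_node q i <= m + 2 * h.
Proof.
rewrite /cheb_node.
have := @cos_geN1 R ((q - i)%:R * pi / q%:R); have := @cos_le1 R ((q - i)%:R * pi / q%:R).
move: (cos _) => c c_le1 c_geN1.
have h2_ge0 : 0 <= 2 * h by rewrite mulr_ge0 // ltW.
have : 0 <= 2 * h * (c + 1) by rewrite mulr_ge0 //; lra.
have : 0 <= 2 * h * (1 - c) by rewrite mulr_ge0 //; lra.
by move=> ? ?; apply/andP; split; lra.
Qed.

Lemma cheb_node_lt q i j : (i < j <= q)%N -> cheb_node q i < cheb_node q j.
Proof.
move=> /andP[lt_ij le_jq]; rewrite /cheb_node ltrD2l ltr_pM2l ?mulr_gt0 //.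
have q_gt0 : 0 < q%:R :> R by rewrite ltr0n; lia.
have angle_in k : (k <= q)%N -> (q - k)%:R * pi / q%:R \in `[0, pi :> R].
  move=> le_kq; rewrite in_itv /= divr_ge0 ?mulr_ge0 ?pi_ge0 //=.
  by rewrite ler_pdivrMr // mulrC ler_pM2l ?pi_gt0 // ler_nat; lia.
rewrite ltr_cos ?angle_in //; last lia.
by rewrite ltr_pM2r ?invr_gt0 // ltr_pM2r ?pi_gt0 // ltr_nat; lia.
Qed.

End ScaledChebyshev.

Lemma periodic_const (T : Type) (f : int -> T) (q : nat) (c : T) : (0 < q)%N ->
  (forall n, f (n + q%:Z) = f n) -> (forall i : nat, (i < q)%N -> f i.+1%:Z = c) ->
  forall n, f n = c.
Proof.
move=> q_gt0 f_per f_c.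
have f_perM (d : nat) x : f (x + d%:Z * q%:Z) = f x.
  elim: d x => [|d IH] x; first by rewrite mul0r addr0.
  by rewrite -addn1 PoszD mulrDl mul1r addrA f_per IH.
have f_perZ d x : f (x + d * q%:Z) = f x.
  case: d => d; first exact: f_perM.
  by rewrite -(f_perM d.+1) NegzE mulNr -addrA addNr addr0.
move=> n; have q_neq0 : q%:Z != 0 by rewrite eqz_nat -lt0n.
have r_ge0 : 0 <= ((n - 1) %% q%:Z)%Z by apply: modz_ge0.
have r_lt : ((n - 1) %% q%:Z < q%:Z)%Z by rewrite ltz_pmod // ltz_nat.
have [r r_eq] : exists r : nat, ((n - 1) %% q%:Z)%Z = r.
  by exists (absz ((n - 1) %% q%:Z)%Z); rewrite gez0_abs.
have -> : n = r.+1%:Z + ((n - 1) %/ q%:Z)%Z * q%:Z.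
  by rewrite -addn1 PoszD -r_eq addrAC (addrC _ (_ * _)) -divz_eq subrK.
by rewrite f_perZ f_c // -ltz_nat -r_eq.
Qed.

Lemma sum_sqr_subr (R : comNzRingType) (f : nat -> R) c n :
  \sum_(i < n) (f i - c) ^+ 2 = \sum_(i < n) f i ^+ 2 - 2 * c * \sum_(i < n) f i + n%:R * c ^+ 2.
Proof.
elim: n => [|n IH]; first by rewrite !big_ord0 mul0r; ring.
by rewrite !big_ord_recr /= IH mulrS; ring.
Qed.

Section ConstantCoefficients.
Variable R : realType.
Variables (a b : int -> R).
Hypothesis a_gt0 : forall n, 0 < a n.

Lemma geomA_prod_a q : geomA a q = powR (prod_a a q) q%:R^-1.
Proof.
rewrite /geomA /prod_a (big_addn 0 _ 1) subn1 /= big_mkord.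
by congr powR; apply: eq_bigr => i _; rewrite addn1.
Qed.

Lemma geomA_gt0 q : 0 < geomA a q.
Proof. by rewrite geomA_prod_a powR_gt0 // prod_a_gt0. Qed.

Lemma geomA_expn q : geomA a q.+1 ^+ q.+1 = prod_a a q.+1.
Proof.
rewrite geomA_prod_a -powR_mulrn ?powR_ge0 // -powRrM mulVf ?pnatr_eq0 //.
by rewrite powRr1 // ltW // prod_a_gt0.
Qed.

Lemma sum_a2_geomA q :
  q.+1%:R * geomA a q.+1 ^+ 2 <= sum_a2 a q.+1 /\
  (sum_a2 a q.+1 = q.+1%:R * geomA a q.+1 ^+ 2 -> forall i, (i < q.+1)%N -> a i.+1 = a 1).
Proof.
pose E (i : 'I_q.+1) := a i.+1 ^+ 2.
have := @leif_AGM R _ predT E (fun i _ => sqr_ge0 _); rewrite /= card_ord.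
rewrite (_ : \sum_(i in predT) E i = sum_a2 a q.+1); last exact: eq_bigl.
rewrite (_ : \prod_(i in predT) E i = (geomA a q.+1 ^+ 2) ^+ q.+1); last first.
  by rewrite -exprM mulnC exprM geomA_expn /prod_a -prodrXl; apply: eq_bigl.
have q_gt0 : 0 < q.+1%:R :> R by rewrite ltr0n.
have sum_ge0 : 0 <= sum_a2 a q.+1 / q.+1%:R.
  by rewrite divr_ge0 ?sumr_ge0 // => i _; apply: sqr_ge0.
move=> [AGM_le AGM_eq]; split.
  by rewrite mulrC -ler_pdivlMr // -(ler_pXn2r (ltn0Sn q)) ?nnegrE ?sqr_ge0.
move=> sum_eq i lt_iq; move: AGM_eq; rewrite sum_eq mulrC mulKf ?pnatr_eq0 // eqxx.
move=> /esym /forall_inP /(_ (Ordinal lt_iq) isT) /forall_inP /(_ ord0 isT) /eqP.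
by rewrite /E /= => /eqP; rewrite eqrXn2 // ?ltW // => /eqP.
Qed.

Lemma size_discr_sub_cheb k (m h : R) :
  (size (prod_a a k.+2 *: discr_poly a b k.+2 - cheb_poly m h k.+2)%R <= k.+2)%N.
Proof.
have [szD _] := discr_poly_size_lead b a_gt0 k.
apply/leq_sizeP => j; rewrite leq_eqVlt coefB coefZ => /orP[/eqP <-|lt_kj].
  by rewrite discr_poly_coef_top // cheb_poly_lead mulfV ?prod_a_neq0 // subrr.
rewrite (leq_sizeP _ _ (cheb_poly_size _ _ _)) //.
by rewrite (leq_sizeP _ _ (eq_leq szD)) // mulr0 subrr.
Qed.

Lemma discr_chebyshev_traces k m h : a k.+2 = a 0 ->
  prod_a a k.+2 *: discr_poly a b k.+2 = cheb_poly m h k.+2 ->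
  sum_b b k.+2 = k.+2%:R * m /\
  sum_a2 a k.+2 + (\sum_(i < k.+2) (b i.+1 - m) ^+ 2) / 2 = k.+2%:R * h ^+ 2.
Proof.
move=> a_q D_eq; have pr_neq0 := prod_a_neq0 a_gt0.
have := congr1 (fun p : {poly R} => p`_k.+1) D_eq.
have := congr1 (fun p : {poly R} => p`_k) D_eq.
rewrite /= !coefZ discr_poly_coef1 // discr_poly_coef2 // cheb_poly_coef1 cheb_poly_coef2.
have -> : prod_a a k.+2 * (sym2 a b k.+2 / prod_a a k.+2 - a 0 / prod_a a k.+1) =
    sym2 a b k.+2 - a 0 * a k.+2.
  by rewrite prod_aS; field; rewrite pr_neq0 gt_eqF.
have -> : prod_a a k.+2 * (- sum_b b k.+2 / prod_a a k.+2) = - sum_b b k.+2 by field.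
rewrite a_q => coef2 coef1.
have sum_b_eq : sum_b b k.+2 = k.+2%:R * m.
  by apply: oppr_inj; rewrite coef1 mulNr.
split=> //; move: coef2; rewrite /sym2 /= (sum_a2S a k.+1) a_q.
rewrite (sum_sqr_subr (fun i => b i.+1)) -/(sum_b b _) -/(sum_b2 b _) sum_b_eq.
by rewrite -natr1; nra.
Qed.

Lemma jacobi_const_of_chebyshev k m h : a k.+2 = a 0 -> 0 < h -> h <= geomA a k.+2 ->
  prod_a a k.+2 *: discr_poly a b k.+2 = cheb_poly m h k.+2 ->
  forall i, (i < k.+2)%N -> a i.+1 = a 1 /\ b i.+1 = m.
Proof.
move=> a_q h_gt0 h_le D_eq.
have [_ traces] := discr_chebyshev_traces a_q D_eq.
have [AGM_le AGM_eq] := sum_a2_geomA k.+1.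
set V := \sum_(i < k.+2) _ in traces.
have V_ge0 : 0 <= V by apply: sumr_ge0 => i _; apply: sqr_ge0.
have h_le' : k.+2%:R * h ^+ 2 <= k.+2%:R * geomA a k.+2 ^+ 2.
  by rewrite ler_pM2l ?ltr0n // lerXn2r // nnegrE ltW // geomA_gt0.
have V_eq0 : V = 0 by lra.
move=> i lt_ik; split; first by apply: AGM_eq => //; lra.
have := psumr_eq0P (i := Ordinal lt_ik) (fun j _ => sqr_ge0 _) V_eq0 isT.
by move/eqP; rewrite sqrf_eq0 subr_eq0 => /eqP.
Qed.

End ConstantCoefficients.

Section PeriodicJacobiSpectrum.
Variable R : realType.
Variable k : nat.
Variables (a b : int -> R) (lamp lamm : nat -> R).
Hypothesis a_gt0 : forall n, 0 < a n.
Hypothesis a_per : forall n, a (n + k.+2%:Z) = a n.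
Hypothesis b_per : forall n, b (n + k.+2%:Z) = b n.
Hypothesis min_period : forall p : nat, (1 <= p < k.+2)%N ->
  ~ (forall n, a (n + p%:Z) = a n /\ b (n + p%:Z) = b n).
Hypothesis band_lt : forall m : nat, (1 <= m <= k.+2)%N -> lamp m.-1 < lamm m.
Hypothesis gap_le : forall m : nat, (1 <= m <= k.+1)%N -> lamm m <= lamp m.
Hypothesis spectrum : forall x : R, `|discr a b k.+2 x| <= 2 <->
  exists m : nat, (1 <= m <= k.+2)%N /\ lamp m.-1 <= x <= lamm m.

Local Notation q := k.+2.
Local Notation al := (lamp 0%N).
Local Notation be := (lamm q).
Local Notation D := (discr a b q).
Local Notation Dq := (discr_poly a b q).
Local Notation A := (geomA a q).

Let a_q : a q = a 0.
Proof. by have := a_per 0; rewrite add0r. Qed.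

Lemma al_le_lamp j : (j <= k.+1)%N -> al <= lamp j.
Proof.
elim: j => [//|j IH] lt_jk; apply: le_trans (IH (ltnW lt_jk)) (ltW _).
have band : lamp j < lamm j.+1 by apply: (band_lt (m := j.+1)); lia.
by apply: lt_le_trans band (gap_le _); lia.
Qed.

Lemma lamm_le_be m : (1 <= m <= q)%N -> lamm m <= be.
Proof.
move=> m_in; rewrite -(subKn (_ : m <= q)%N); last lia.
have : (q - m <= k.+1)%N by lia.
elim: (q - m)%N => [_|d IH le_dk]; first by rewrite subn0.
apply: le_trans (IH (ltnW le_dk)); rewrite subnS.
by apply: le_trans (gap_le _) (ltW (band_lt _)); lia.
Qed.

Lemma al_lt_be : al < be.
Proof. by apply: lt_le_trans (band_lt (m := 1%N) _) (lamm_le_be (m := 1%N) _). Qed.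

Lemma discr_le2_in_hull x : `|D x| <= 2 -> al <= x <= be.
Proof.
move=> /spectrum [m [m_in /andP[le_x x_le]]].
by rewrite (le_trans (al_le_lamp _) le_x) ?(le_trans x_le (lamm_le_be _)) //; lia.
Qed.

Lemma discr_poly_shift c :
  size (Dq - c%:P) = q.+1 /\ 0 < lead_coef (Dq - c%:P).
Proof.
have [szD lcD] := discr_poly_size_lead b a_gt0 k.
have lt_sz : (size (- c%:P) < size Dq)%N.
  by rewrite size_polyN szD (leq_ltn_trans (size_polyC_leq1 _)).
by rewrite size_polyDl // lead_coefDl // szD lcD invr_gt0 prod_a_gt0.
Qed.

Lemma discr_at_al : 2 <= (-1) ^+ q * D al.
Proof.
rewrite leNgt; apply/negP => D_lt.
have [sz lc] := discr_poly_shift (2 * (-1) ^+ q).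
have sgnE x : (-1) ^+ q * (Dq - (2 * (-1) ^+ q)%:P).[x] = (-1) ^+ q * D x - 2.
  rewrite hornerD hornerN hornerC horner_discr_poly mulrBr mulrCA.
  by rewrite -expr2 sqrr_sign mulr1.
have neg_al : (-1) ^+ q * (Dq - (2 * (-1) ^+ q)%:P).[al] < 0 by rewrite sgnE; lra.
have [r lt_r /rootP root_r] := poly_root_lt sz lc neg_al.
have : `|D r| <= 2.
  have := sgnE r; rewrite root_r mulr0 => /eqP; rewrite eq_sym subr_eq0 => /eqP D_r.
  by rewrite -(normrMsign q) D_r ger0_norm.
by move/discr_le2_in_hull => /andP[/(lt_le_trans lt_r)]; rewrite ltxx.
Qed.

Lemma discr_at_be : 2 <= D be.
Proof.
rewrite leNgt; apply/negP => D_lt.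
have [_ lc] := discr_poly_shift 2.
have neg_be : (Dq - 2%:P).[be] < 0 by rewrite hornerD hornerN hornerC horner_discr_poly; lra.
have [r lt_r /rootP] := poly_root_gt lc neg_be.
rewrite hornerD hornerN hornerC horner_discr_poly => /eqP; rewrite subr_eq0 => /eqP D_r.
have : `|D r| <= 2 by rewrite D_r ger0_norm.
by move/discr_le2_in_hull => /andP[_ /(lt_le_trans lt_r)]; rewrite ltxx.
Qed.

Lemma discr_root_in_hull x y : x <= y -> D x * D y < 0 ->
  exists2 r, x < r < y & al <= r <= be.
Proof.
move=> le_xy; rewrite -!horner_discr_poly => /(poly_ivtoo le_xy) [r r_in /rootP root_r].
exists r; first by rewrite in_itv /= in r_in.
by apply: discr_le2_in_hull; rewrite -horner_discr_poly root_r normr0.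
Qed.

Lemma al_lt_of_discr x : 2 <= (-1) ^+ k.+1 * D x -> al < x.
Proof.
move=> D_x; rewrite ltNge; apply/negP => le_x.
have sgn : D x * D al < 0.
  apply: (@opposite_signs_mulr_lt0 _ ((-1) ^+ k.+1)); first lra.
  by have D_al := discr_at_al; rewrite -signrS; lra.
have [r /andP[_ lt_r] /andP[le_r _]] := discr_root_in_hull le_x sgn.
by move: (lt_le_trans lt_r le_r); rewrite ltxx.
Qed.

Lemma lt_be_of_discr x : 2 <= - D x -> x < be.
Proof.
move=> D_x; rewrite ltNge; apply/negP => le_x.
have sgn : D be * D x < 0 by have D_be := discr_at_be; rewrite pmulr_rlt0; lra.
have [r /andP[lt_r _] /andP[_ le_r]] := discr_root_in_hull le_x sgn.
by move: (lt_le_trans lt_r le_r); rewrite ltxx.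
Qed.

Lemma discr_at_phi_root lam n : jphi a b lam q = 0 ->
  0 < (-1) ^+ n * jphi a b lam q.+1 -> 2 <= (-1) ^+ n * D lam.
Proof.
move=> phi_q u_gt0; have := wronskian_theta_phi b a_gt0 lam q.
rewrite phi_q mulr0 subr0 a_q divff ?gt_eqF // => wr.
rewrite /discr mulrDr; move: u_gt0.
set u := _ * jphi _ _ _ _; set v := _ * jtheta _ _ _ _ => u_gt0.
(* the Wronskian makes [D] of the form [u + 1/u] *)
have uv : u * v = 1 by rewrite mulrACA -expr2 sqrr_sign mul1r mulrC.
by have := sqr_ge0 (u - 1); nra.
Qed.

Lemma discr_alternation : exists s : nat -> R,
  [/\ forall i, (i < q)%N -> s i < s i.+1,
      forall i, (i <= q)%N -> al <= s i <= be &
      forall i, (i <= q)%N -> 2 <= (-1) ^+ (q - i) * D (s i)].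
Proof.
have [z zW] := phi_zeros_exist b a_gt0 k; have [z_lt zP] := zW.
have D_z j : (j < k.+1)%N -> 2 <= (-1) ^+ (k.+1 - j) * D (z j).
  move=> lt_jk; apply: discr_at_phi_root; first exact: (zP j lt_jk).1.
  exact: phi_zeros_sign_next zW j lt_jk.
have al_lt : al < z 0%N.
  by apply: al_lt_of_discr; have := D_z 0%N (ltn0Sn k); rewrite subn0.
have lt_be : z k < be.
  by apply: lt_be_of_discr; have := D_z k (ltnSn k); rewrite subSnn expr1 mulN1r.
pose s := bracket al be z k.+1.
have s_lt := bracket_lt (ltn0Sn k) z_lt al_lt lt_be.
have s_le := nondecreasing_upto (increasing_upto (n := q.+1) s_lt).
have s_q : s q = be by rewrite /s /bracket /= eqxx.
exists s; split => // i le_iq.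
  by apply/andP; split; [apply: (s_le 0%N) | rewrite -s_q; apply: s_le]; lia.
case: i le_iq => [|i] le_iq; first by rewrite subn0; exact: discr_at_al.
have [->|ne] := eqVneq i.+1 q; first by rewrite subnn mul1r s_q; exact: discr_at_be.
by rewrite /s bracketE /= ?subSS; [apply: D_z|]; lia.
Qed.

Lemma discr_poly_eq_cheb m h : al = m - 2 * h -> be = m + 2 * h -> 0 < h -> h <= A ->
  prod_a a q *: Dq = cheb_poly m h q.
Proof.
move=> al_eq be_eq h_gt0 h_le; have [s [s_lt s_in s_alt]] := discr_alternation.
apply/eqP; rewrite -subr_eq0; apply/eqP.
apply: (alternating_poly_eq0 (e := (-1) ^+ q) _ (size_discr_sub_cheb b a_gt0 k m h) s_lt).
  by rewrite signr_eq0.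
move=> i le_iq; rewrite signr_subn // hornerD hornerN hornerZ horner_discr_poly.
have T_le : (-1) ^+ (q - i) * (cheb_poly m h q).[s i] <= 2 * h ^+ q.
  by rewrite (le_trans (ler_norm _)) // normrMsign cheb_poly_bound // -al_eq -be_eq s_in.
have hq_le : h ^+ q <= prod_a a q.
  by rewrite -geomA_expn // lerXn2r // nnegrE ltW // geomA_gt0.
have pD_ge : prod_a a q * 2 <= prod_a a q * ((-1) ^+ (q - i) * D (s i)).
  by rewrite ler_wpM2l ?s_alt // ltW // prod_a_gt0.
by rewrite mulrBr mulrCA; lra.
Qed.

Lemma spectrum_width_gt : 2 * A < (be - al) / 2.
Proof.
rewrite ltNge; apply/negP => width_le.
set h := (be - al) / 4; set m := (al + be) / 2.
have h_gt0 : 0 < h by rewrite divr_gt0 ?subr_gt0 ?al_lt_be.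
have h_le : h <= A by rewrite /h; lra.
have D_eq : prod_a a q *: Dq = cheb_poly m h q.
  by apply: discr_poly_eq_cheb => //; rewrite /m /h; field.
have const := jacobi_const_of_chebyshev a_gt0 a_q h_gt0 h_le D_eq.
have a_const := periodic_const (ltn0Sn _) a_per (fun i lt_iq => (const i lt_iq).1).
have b_const := periodic_const (ltn0Sn _) b_per (fun i lt_iq => (const i lt_iq).2).
by apply: (min_period (p := 1%N)) => // n; rewrite !a_const !b_const.
Qed.

Lemma discr_le2_of_closed_gaps : (forall m, (1 <= m <= k.+1)%N -> lamm m = lamp m) ->
  forall x, al <= x <= be -> `|D x| <= 2.
Proof.
move=> closed x /andP[le_x x_le]; apply/spectrum.
suff : forall j, (1 <= j <= q)%N -> x <= lamm j ->
    exists m, (1 <= m <= q)%N /\ lamp m.-1 <= x <= lamm m.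
  by move=> /(_ q); rewrite leqnn; apply.
elim=> [//|[|j] IH] j_in x_le_j; first by exists 1%N; rewrite le_x x_le_j.
have [le_xj|lt_jx] := lerP x (lamm j.+1); first by apply: IH => //; lia.
by exists j.+2; split => //; rewrite x_le_j andbT /= -closed ?ltW //; lia.
Qed.

Lemma discr_not_le2_on_hull m h : al = m - 2 * h -> be = m + 2 * h -> A < h ->
  ~ (forall x, al <= x <= be -> `|D x| <= 2).
Proof.
move=> al_eq be_eq A_lt D_le; have h_gt0 := lt_trans (geomA_gt0 a_gt0 q) A_lt.
have hq_gt : prod_a a q < h ^+ q by rewrite -geomA_expn // ltrXn2r // ltW // geomA_gt0.
pose y := cheb_node m h q.
have y_in i : al <= y i <= be by rewrite al_eq be_eq; apply: cheb_node_in.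
have alt i : (i <= q)%N ->
    0 < (-1) ^+ q * (-1) ^+ i * (cheb_poly m h q - prod_a a q *: Dq).[y i].
  move=> le_iq; rewrite signr_subn // hornerD hornerN hornerZ horner_discr_poly.
  have sign2 : (-1) ^+ (q - i) * (-1) ^+ (q - i) = 1 :> R by rewrite -expr2 sqrr_sign.
  rewrite horner_cheb_node // mulrBr (mulrCA _ (2 * h ^+ q)) sign2 mulr1.
  rewrite (mulrCA _ (prod_a a q)).
  have D_i : (-1) ^+ (q - i) * D (y i) <= 2.
    by rewrite (le_trans (ler_norm _)) // normrMsign D_le.
  have : prod_a a q * ((-1) ^+ (q - i) * D (y i)) <= prod_a a q * 2.
    by rewrite ler_wpM2l // ltW // prod_a_gt0.
  by lra.
have P_eq0 : cheb_poly m h q - prod_a a q *: Dq = 0.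
  apply: (alternating_poly_eq0 (n := q) (e := (-1) ^+ q) (s := y)).
  - by rewrite signr_eq0.
  - by move: (size_discr_sub_cheb b a_gt0 k m h); rewrite -size_polyN opprB.
  - by move=> i lt_iq; apply: (cheb_node_lt m h_gt0); lia.
  - by move=> i le_iq; apply/ltW/alt.
by have := alt 0%N isT; rewrite P_eq0 horner0 mulr0 ltxx.
Qed.

Lemma exists_open_gap : exists m, (1 <= m <= k.+1)%N /\ lamm m < lamp m.
Proof.
case: (pselect (exists m, (1 <= m <= k.+1)%N /\ lamm m < lamp m)) => // no_gap.
have closed m : (1 <= m <= k.+1)%N -> lamm m = lamp m.
  move=> m_in; apply/eqP; rewrite eq_le gap_le //= leNgt; apply/negP => lt_m.
  by apply: no_gap; exists m.
exfalso; apply: (@discr_not_le2_on_hull ((al + be) / 2) ((be - al) / 4)).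
- by field.
- by field.
- by have := spectrum_width_gt; lra.
- exact: discr_le2_of_closed_gaps.
Qed.

End PeriodicJacobiSpectrum.

Unset Implicit Arguments.

Theorem lemma2 (R : realType) (q : nat) (a b : int -> R)
  (lamp lamm : nat -> R)
  (hq : (2 <= q)%N)
  (ha : forall n, 0 < a n)
  (hpa : forall n, a (n + q%:Z) = a n)
  (hpb : forall n, b (n + q%:Z) = b n)
  (hmin : forall p : nat, (1 <= p < q)%N ->
      ~ (forall n, a (n + p%:Z) = a n /\ b (n + p%:Z) = b n))
  (* band edges lamp (m-1) = lambda^+_{m-1}, lamm m = lambda^-_m *)
  (hband : forall m : nat, (1 <= m <= q)%N -> lamp m.-1 < lamm m)
  (hgap : forall m : nat, (1 <= m <= q.-1)%N -> lamm m <= lamp m)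
  (hspec : forall x : R, `|discr a b q x| <= 2 <->
      exists m : nat, (1 <= m <= q)%N /\ lamp m.-1 <= x <= lamm m) :
  (lamm q - lamp 0%N) / 2 > 2 * geomA a q /\
  exists m : nat, (1 <= m <= q.-1)%N /\ lamm m < lamp m.
Proof.
have [k q_eq] : exists k, q = k.+2 by exists (q - 2)%N; lia.
subst q; split.
  exact: spectrum_width_gt ha hpa hpb hmin hband hgap hspec.
exact: exists_open_gap ha hpa hpb hmin hband hgap hspec.
Qed.
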